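(* For any graph $G$ and any bipartite graph $H$ in which all vertex degrees are odd, $\alpha_{\mathrm{od}}(\mu[G,H])\ge \frac12|H|\cdot\alpha_{\mathrm{od}}(G\,\Box\,K_2)$.
   Context: For graphs $G$ and $H$, $\mu[G,H]$ is the graph obtained by replacing each vertex $w\in V(H)$ with a copy $G_w$ of $G$ and, for every edge $w_1w_2\in E(H)$, adding the perfect matching between $G_{w_1}$ and $G_{w_2}$ joining the two copies of each vertex of $G$. $G\,\Box\,K_2$ is the Cartesian product of $G$ with an edge (two copies of $G$ with a perfect matching between corresponding vertices). An odd independent set in a graph $F=(V,E)$ is an independent set $S$ such that every $v\in V\setminus S$ has either no neighbor or an odd number of neighbors in $S$; $\alpha_{\mathrm{od}}(F)$ is the maximum size of such a set. $|H|$ is the number of vertices. *)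

From mathcomp Require Import all_boot.
Set Implicit Arguments. Unset Strict Implicit. Unset Printing Implicit Defensive.

Definition simple_graph (T : finType) (e : rel T) : Prop :=
  symmetric e /\ irreflexive e.

Definition nbrs_in (T : finType) (e : rel T) (S : {set T}) (v : T) : {set T} :=
  [set u in S | e v u].

Definition odd_indep (T : finType) (e : rel T) (S : {set T}) : bool :=
  [forall x in S, forall y in S, ~~ e x y] &&
  [forall v in ~: S, (#|nbrs_in e S v| == 0) || odd #|nbrs_in e S v|].

Definition alpha_od (T : finType) (e : rel T) : nat :=
  \max_(S : {set T} | odd_indep e S) #|S|.

(* mu[G,H]: vertex (u,w) is the copy of u in G_w; edges inside each copy,
   and matching edges (u,w1)-(u,w2) for every edge w1w2 of H *)
Definition mu_rel (VG VH : finType) (eG : rel VG) (eH : rel VH) : rel (VG * VH) :=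
  fun p q => ((p.2 == q.2) && eG p.1 q.1) || ((p.1 == q.1) && eH p.2 q.2).

Definition box_rel (VG VF : finType) (eG : rel VG) (eF : rel VF) : rel (VG * VF) :=
  fun p q => ((p.2 == q.2) && eG p.1 q.1) || ((p.1 == q.1) && eF p.2 q.2).

Definition K2_rel : rel bool := fun a b => a != b.

Definition bipartite (T : finType) (e : rel T) : Prop :=
  exists c : T -> bool, forall x y, e x y -> c x != c y.

Definition deg (T : finType) (e : rel T) (v : T) : nat := #|[set u | e v u]|.

From mathcomp Require Import all_boot.
Set Implicit Arguments. Unset Strict Implicit. Unset Printing Implicit Defensive.

(* Let c be a proper 2-colouring of H. The map (u, w) |-> (u, c w) is a
   homomorphism from mu[G,H] to G □ K_2, and every neighbour (u', b) of the
   image of a vertex (u, w) has an odd number of preimages among the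
   neighbours of (u, w): one if b = c w, and deg_H w if b <> c w. Under such a
   map the preimage of an odd independent set is odd independent, as every
   neighbour count becomes a sum of as many odd numbers. For an optimal odd
   independent set S of G □ K_2, the preimages of S under the maps defined by
   c and by ~~ c have |H| |S| vertices together, so one has at least
   |H| |S| / 2 of them. *)

Lemma odd_sum_odd (I : finType) (A : {pred I}) (F : I -> nat) :
  (forall i, i \in A -> odd (F i)) -> odd (\sum_(i in A) F i) = odd #|A|.
Proof.
move=> oddF; rewrite -sum1_card.
by elim/big_rec2: _ => // i m n /oddF oddFi; rewrite !oddD oddFi => ->.
Qed.

Lemma card_sum_mem (T : finType) (A : {set T}) : #|A| = \sum_x (x \in A).
Proof. by rewrite -sum1_card big_mkcond /=; apply: eq_bigr => x _; case: (x \in A). Qed.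

Lemma odd_indep0 (T : finType) (e : rel T) : odd_indep e set0.
Proof.
apply/andP; split; apply/forallP => x; apply/implyP; rewrite ?inE //= => _.
suff -> : nbrs_in e set0 x = set0 by rewrite cards0.
by apply/setP => y; rewrite !inE.
Qed.

Lemma alpha_od_attained (T : finType) (e : rel T) :
  exists2 S : {set T}, odd_indep e S & alpha_od e = #|S|.
Proof.
have [|S oiS max_S] := @eq_bigmax_cond _ (odd_indep e) (fun S => #|S|).
  by apply/card_gt0P; exists set0; apply: odd_indep0.
by exists S.
Qed.

Section OddPreimage.
Variables (T T' : finType) (e : rel T) (e' : rel T') (f : T -> T').

Definition fibre_nbrs (x : T) (y' : T') : {set T} := [set y | e x y & f y == y'].

Hypothesis f_hom : forall x y, e x y -> e' (f x) (f y).
Hypothesis odd_fibre_nbrs : forall x y', e' (f x) y' -> odd #|fibre_nbrs x y'|.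

Lemma card_nbrs_in_preimset (S : {set T'}) (x : T) :
  #|nbrs_in e (f @^-1: S) x| = \sum_(y' in nbrs_in e' S (f x)) #|fibre_nbrs x y'|.
Proof.
rewrite -sum1_card (partition_big f (mem (nbrs_in e' S (f x)))) /=; last first.
  by move=> y; rewrite !inE => /andP[Sy /f_hom ->]; rewrite andbT.
apply: eq_bigr => y' /[!inE] /andP[Sy' _]; rewrite -sum1dep_card.
by apply: eq_bigl => y; rewrite !inE; case: eqP => [->|]; rewrite ?Sy' ?andbF.
Qed.

Lemma odd_indep_preimset (S : {set T'}) :
  odd_indep e' S -> odd_indep e (f @^-1: S).
Proof.
case/andP=> /forallP indepS /forallP parityS; apply/andP; split.
  apply/forallP => x; apply/implyP; rewrite inE => Sfx.
  apply/forallP => y; apply/implyP; rewrite inE => Sfy.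
  move: (indepS (f x)) => /implyP/(_ Sfx)/forallP/(_ (f y))/implyP/(_ Sfy).
  exact: contra (@f_hom x y).
apply/forallP => x; apply/implyP; rewrite !inE => Sfx.
have := parityS (f x); rewrite inE Sfx /= card_nbrs_in_preimset.
have fibre_odd y' : y' \in nbrs_in e' S (f x) -> odd #|fibre_nbrs x y'|.
  by rewrite inE => /andP[_ /odd_fibre_nbrs].
rewrite sum_nat_eq0 odd_sum_odd //.
case/orP=> [/eqP/card0_eq noS | ->]; last exact: orbT.
by apply/orP; left; apply/forall_inP => y'; rewrite noS.
Qed.

End OddPreimage.

Definition colour_map (VG VH : finType) (c : VH -> bool) (p : VG * VH) : VG * bool :=
  (p.1, c p.2).

Lemma card_colour_preimsets (VG VH : finType) (c : VH -> bool) (S : {set VG * bool}) :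
  #|colour_map c @^-1: S| + #|colour_map (negb \o c) @^-1: S| = #|VH| * #|S|.
Proof.
have sliceE u w : ((u, c w) \in S) + ((u, ~~ c w) \in S) = \sum_b ((u, b) \in S).
  by rewrite big_bool; case: (c w); rewrite // addnC.
rewrite !card_sum_mem -big_split /=.
rewrite (eq_bigr (fun p => \sum_b ((p.1, b) \in S))); last first.
  by move=> [u w] _; rewrite !inE sliceE.
rewrite -(pair_bigA _ (fun u _ => \sum_b ((u, b) \in S))) exchange_big /=.
rewrite (eq_bigr (fun=> \sum_x (x \in S))); last first.
  by move=> w _; rewrite pair_bigA; apply: eq_bigr => -[].
by rewrite sum_nat_const cardT mulnC.
Qed.

Section ColourMap.
Variables (VG VH : finType) (eG : rel VG) (eH : rel VH) (c : VH -> bool).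
Hypothesis eG_irr : irreflexive eG.
Hypothesis c_proper : forall w w', eH w w' -> c w != c w'.

Lemma colour_map_hom x y :
  mu_rel eG eH x y -> box_rel eG K2_rel (colour_map c x) (colour_map c y).
Proof.
case: x y => [u w] [v z]; rewrite /mu_rel /box_rel /K2_rel /=.
case/orP=> /andP[/eqP <- e_uv]; first by rewrite eqxx e_uv.
by rewrite eqxx c_proper ?orbT.
Qed.

Lemma odd_fibre_nbrs_colour_map :
  (forall w, odd (deg eH w)) -> forall x y',
  box_rel eG K2_rel (colour_map c x) y' ->
  odd #|fibre_nbrs (mu_rel eG eH) (colour_map c) x y'|.
Proof.
move=> deg_odd [u w] [u' b]; rewrite /box_rel /K2_rel /=.
case/orP=> [/andP[/eqP <- e_uu'] | /andP[/eqP <- cw_b]].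
  suff -> : fibre_nbrs (mu_rel eG eH) (colour_map c) (u, w) (u', c w) = [set (u', w)].
    by rewrite cards1.
  apply/setP=> -[v z]; rewrite !inE /mu_rel /colour_map /= !xpair_eqE.
  case: (eqVneq v u') => [-> | _]; last by rewrite !andbF.
  have /negPf -> : u != u' by apply: contraTneq e_uu' => ->; rewrite eG_irr.
  by rewrite e_uu' andbT; case: (eqVneq w z) => [-> | ]; rewrite ?eqxx // eq_sym => /negPf ->.
suff -> : fibre_nbrs (mu_rel eG eH) (colour_map c) (u, w) (u, b) =
          setX [set u] [set z | eH w z] by rewrite cardsX cards1 mul1n deg_odd.
apply/setP=> -[v z]; rewrite !inE /mu_rel /colour_map /= !xpair_eqE.
case: (eqVneq u v) => [<- | ]; last by rewrite andbF.
rewrite eG_irr andbF /=; case e_wz: (eH w z); rewrite ?andbT //.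
by move: (c_proper e_wz) cw_b; case: (c w); case: (c z); case: b.
Qed.

End ColourMap.

Theorem theorem4 (VG VH : finType) (eG : rel VG) (eH : rel VH) :
  simple_graph eG -> simple_graph eH ->
  bipartite eH -> (forall w : VH, odd (deg eH w)) ->
  #|VH| * alpha_od (box_rel eG K2_rel) <= 2 * alpha_od (mu_rel eG eH).
Proof.
move=> [_ eG_irr] _ [c c_proper] deg_odd.
have [S oiS ->] := alpha_od_attained (box_rel eG K2_rel).
have oi_preimset (c' : VH -> bool) : (forall w w', eH w w' -> c' w != c' w') ->
    odd_indep (mu_rel eG eH) (colour_map c' @^-1: S).
  move=> c'_proper; apply: odd_indep_preimset oiS.
    exact: colour_map_hom.
  exact: odd_fibre_nbrs_colour_map.
have nc_proper w w' : eH w w' -> (negb \o c) w != (negb \o c) w'.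
  by rewrite /= (inj_eq negb_inj); apply: c_proper.
rewrite -(card_colour_preimsets c S) mul2n -addnn.
by rewrite leq_add // leq_bigmax_cond // oi_preimset.
Qed.
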